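(* When $n$ agents have additive valuations over chores and equal entitlements, the AlgChores allocation algorithm gives every agent $i$ a bundle of cost at most $\frac{4n-1}{3n}APS_i$.
   Context: A set $\mathcal{M}$ of $m$ indivisible chores is allocated to $n$ agents, each agent $i$ having an additive disvaluation (cost) function $c_i$ and entitlement (responsibility) $b_i=\frac{1}{n}$. The anyprice share for chores is $APS(c_i,b_i)=\max_{P}\min_{\{S\subseteq\mathcal{M}\,:\,\sum_{j\in S}p_j\ge b_i\}} c_i(S)$, where $P=(p_1,\ldots,p_m)$ ranges over nonnegative price vectors with $\sum_j p_j=1$. An instance is identically ordered (IDO) if chores can be indexed $e_1,\ldots,e_m$ so that $c_i(e_j)\ge c_i(e_k)$ for every agent $i$ and every $j<k$. AlgChores (of Barman and Krishnamurthy 2020), on an IDO instance: start with all bundles empty; for $r=1,\ldots,m$, choose an agent $i$ who envies no other agent, add chore $e_r$ to her bundle, and then resolve envy cycles (by rotating bundles along cycles in the envy graph); output the resulting allocation. On general instances, AlgChores is run via the standard reduction to IDO instances, which preserves the approximation guarantee. *)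

From HB Require Import structures.
From mathcomp Require Import all_boot all_order all_algebra.
From mathcomp Require Import classical_sets reals.
Set Implicit Arguments. Unset Strict Implicit. Unset Printing Implicit Defensive.
Import Order.TTheory GRing.Theory Num.Theory.
Local Open Scope ring_scope.

(* Agents are 'I_n, chores are 'I_m (chore e_{r+1} of the paper = index r). *)
Section Defs.
Variables (R : realType) (n m : nat).

Definition bcost (ci : 'I_m -> R) (S : {set 'I_m}) : R := \sum_(j in S) ci j.

Definition price_vector (p : 'I_m -> R) : Prop :=
  (forall j, 0 <= p j) /\ \sum_j p j = 1.

(* min_{S : p(S) >= b} c_i(S)  (the family contains setT whenever b <= 1) *)
Definition aps_value (ci : 'I_m -> R) (b : R) (p : 'I_m -> R) : R :=
  \big[Num.min/bcost ci (finset.setT : {set 'I_m})]_(S : {set 'I_m} | b <= \sum_(j in S) p j) bcost ci S.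

(* anyprice share for chores: max over price vectors (attained; sup over the set of values) *)
Definition APS (ci : 'I_m -> R) (b : R) : R :=
  sup [set v | exists p, price_vector p /\ v = aps_value ci b p].

Definition alloc := 'I_n -> {set 'I_m}.

Definition envies (c : 'I_n -> 'I_m -> R) (A : alloc) (i k : 'I_n) : Prop :=
  bcost (c i) (A k) < bcost (c i) (A i).

Definition envy_cycle (c : 'I_n -> 'I_m -> R) (A : alloc) (s : seq 'I_n) : Prop :=
  [/\ s != [::], uniq s & forall x, x \in s -> envies c A x (next s x)].

Definition rotate (c : 'I_n -> 'I_m -> R) (A A' : alloc) : Prop :=
  exists s, envy_cycle c A s /\
    forall x, A' x = if x \in s then A (next s x) else A x.

Inductive rotations (c : 'I_n -> 'I_m -> R) : alloc -> alloc -> Prop :=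
| rot_refl A : rotations c A A
| rot_step A B C : rotate c A B -> rotations c B C -> rotations c A C.

Definition envy_acyclic (c : 'I_n -> 'I_m -> R) (A : alloc) : Prop :=
  ~ exists s, envy_cycle c A s.

Definition add_chore (A : alloc) (i : 'I_n) (x : 'I_m) : alloc :=
  fun k => if k == i then x |: A k else A k.

Definition empty_alloc : alloc := fun _ => (finset.set0 : {set 'I_m}).

(* AlgChores on an IDO instance c: after processing r chores the state is A. *)
Inductive algchores_ido_reach (c : 'I_n -> 'I_m -> R) : nat -> alloc -> Prop :=
| ido_start : algchores_ido_reach c 0 empty_alloc
| ido_step (j : 'I_m) (A A' : alloc) (i : 'I_n) :
    algchores_ido_reach c j A ->
    (forall k, ~ envies c A i k) ->
    rotations c (add_chore A i j) A' ->
    envy_acyclic c A' ->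
    algchores_ido_reach c j.+1 A'.

Definition algchores_ido (c : 'I_n -> 'I_m -> R) (A : alloc) : Prop :=
  algchores_ido_reach c m A.

Definition IDO (c : 'I_n -> 'I_m -> R) : Prop :=
  forall i (j k : 'I_m), (j <= k)%N -> c i k <= c i j.

Definition ido_cost (c : 'I_n -> 'I_m -> R) : 'I_n -> 'I_m -> R :=
  fun i j => nth 0 (sort (fun x y => y <= x) [seq c i k | k <- enum 'I_m]) j.

(* standard reduction back to the original instance: the indices are processed
   from the last (cheapest) one e_m down to e_1; the owner (in the IDO
   allocation A') of the current index picks a remaining chore of minimum cost
   for her.  State: (number of unprocessed indices, bundles, remaining chores). *)
Inductive reduce_reach (c : 'I_n -> 'I_m -> R) (A' : alloc) :
  nat -> alloc -> {set 'I_m} -> Prop :=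
| red_start : reduce_reach c A' m empty_alloc (finset.setT : {set 'I_m})
| red_step (j : 'I_m) (B : alloc) (T : {set 'I_m}) (i : 'I_n) (x : 'I_m) :
    reduce_reach c A' j.+1 B T ->
    j \in A' i ->
    x \in T ->
    (forall y, y \in T -> c i x <= c i y) ->
    reduce_reach c A' j (add_chore B i x) (T :\ x).

Definition algchores (c : 'I_n -> 'I_m -> R) (B : alloc) : Prop :=
  exists A', algchores_ido (ido_cost c) A' /\
    exists T, reduce_reach c A' 0 B T.
End Defs.

From mathcomp Require Import all_boot all_order all_algebra.
From mathcomp Require Import reals.
From mathcomp Require Import lra zify.
Set Implicit Arguments. Unset Strict Implicit. Unset Printing Implicit Defensive.
Import Order.TTheory GRing.Theory Num.Theory.
Local Open Scope ring_scope.

(* When AlgChores, run on the identically ordered instance, hands chore e_j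
   to an envy-free agent i, her bundle has the least cost v (for her) among
   all bundles, which together contain e_1, ..., e_(j-1) exactly once.
   Three price vectors bound her anyprice share a from below: the unit price
   on e_j gives c(e_j) <= a; prices proportional to her costs give
   n v + c(e_j) <= n a; and, when no bundle is empty, prices proportional to
   [e <= e_j] + #{agents whose bundle is {e}} (total at least 2n+1, at most 2
   per chore) force every set of price 1/n to contain either a whole bundle
   and another chore of cost >= c(e_j), or three chores of cost >= c(e_j),
   whence min (v + c(e_j), 3 c(e_j)) <= a.  In every case
   v + c(e_j) <= (4n-1)/(3n) a.  Rotating bundles along envy cycles only
   lowers costs, and the reduction from a general instance gives each agent,
   at the step of her chore e_j, a remaining chore costing at most her j-th
   largest cost. *)

Lemma card_ord_lt (m j : nat) : (j <= m)%N -> #|[set k : 'I_m | (k < j)%N]| = j.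
Proof.
move=> le_jm; have widen_inj : injective (widen_ord le_jm).
  by move=> x y /(congr1 val) /= /val_inj.
rewrite -[RHS](card_ord j) -cardsT -(card_imset _ widen_inj); apply: eq_card => k.
rewrite inE; apply/idP/imsetP => [lt_kj | [x _ ->]]; last exact: (ltn_ord x).
by exists (Ordinal lt_kj) => //; apply: val_inj.
Qed.

Section Shares.
Variables (R : realType) (m : nat).
Implicit Types (ci d w p : 'I_m -> R) (b a z : R) (S : {set 'I_m}).

Lemma bcost_setU1_le ci x S :
  (forall y, 0 <= ci y) -> bcost ci (x |: S) <= ci x + bcost ci S.
Proof.
move=> ci_ge0; have [xS | xNS] := boolP (x \in S); last by rewrite /bcost big_setU1.
by rewrite (setUidPr _) ?lerDr // sub1set.
Qed.

Lemma aps_value_le_total ci b p : aps_value ci b p <= bcost ci setT.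
Proof. by rewrite /aps_value; elim/big_rec: _ => // S v _ le_v; rewrite ge_min le_v orbT. Qed.

Lemma aps_value_ge ci b p z : price_vector p -> b <= 1 ->
  (forall S, b <= \sum_(j in S) p j -> z <= bcost ci S) -> z <= aps_value ci b p.
Proof.
move=> [_ p_sum1] b_le1 z_le; rewrite /aps_value; elim/big_rec: _ => [|S v bS z_le_v].
  by apply: z_le; under eq_bigl do rewrite inE; rewrite p_sum1.
by rewrite le_min z_le_v z_le.
Qed.

Lemma aps_value_le_APS ci b p : price_vector p -> aps_value ci b p <= APS ci b.
Proof.
move=> p_price; apply: ub_le_sup; last by exists p.
by exists (bcost ci setT) => _ [q [_ ->]]; apply: aps_value_le_total.
Qed.

(* Unlike [APS], this avoids [sup], so it transfers along relabellings of
   the chores. *)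
Definition share_ub d b a := forall p z, price_vector p ->
  (forall S, b <= \sum_(j in S) p j -> z <= bcost d S) -> z <= a.

Lemma APS_share_ub ci b : b <= 1 -> share_ub ci b (APS ci b).
Proof.
move=> b_le1 p z p_price z_le; apply: le_trans (aps_value_le_APS _ _ p_price).
exact: aps_value_ge.
Qed.

Lemma share_ub_perm ci d (sg : 'I_m -> 'I_m) b a :
  injective sg -> d =1 ci \o sg -> share_ub ci b a -> share_ub d b a.
Proof.
move=> sg_inj dE a_ub p z [p_ge0 p_sum1] z_le.
pose q x := p (invF sg_inj x).
have sum_q S : \sum_(x in S) q x = \sum_(k in sg @^-1: S) p k.
  rewrite (reindex_inj sg_inj); apply: eq_big => [k | k _]; first by rewrite inE.
  by rewrite /q invF_f.
have bcost_q S : bcost d (sg @^-1: S) = bcost ci S.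
  rewrite /bcost [RHS](reindex_inj sg_inj); apply: eq_big => [k | k _]; first by rewrite inE.
  by rewrite dE.
apply: (a_ub q) => [|S]; last by rewrite sum_q -bcost_q; apply: z_le.
split=> [x | ]; first exact: p_ge0.
by rewrite -p_sum1 (reindex_inj sg_inj); apply: eq_bigr => k _; rewrite /q invF_f.
Qed.

Lemma share_ub_weights d w b a z :
  (forall x, 0 <= w x) -> 0 < \sum_x w x -> share_ub d b a ->
  (forall S, b * \sum_x w x <= \sum_(x in S) w x -> z <= bcost d S) -> z <= a.
Proof.
move=> w_ge0 W_gt0 a_ub z_le; apply: (a_ub (fun x => w x / \sum_y w y)) => [|S].
  split=> [x | ]; first exact: divr_ge0 (w_ge0 x) (ltW W_gt0).
  by rewrite -mulr_suml divff // gt_eqF.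
by rewrite -mulr_suml ler_pdivlMr // => /z_le.
Qed.

Lemma sum_indicator (j : 'I_m) : \sum_x (x == j)%:R = 1 :> R.
Proof. by rewrite (bigD1 j) //= eqxx big1 ?addr0 // => x /negbTE ->. Qed.

Lemma share_ub_point d b a j :
  0 < b -> (forall x, 0 <= d x) -> share_ub d b a -> d j <= a.
Proof.
move=> b_gt0 d_ge0 a_ub; apply: (share_ub_weights (w := fun x => (x == j)%:R) _ _ a_ub).
- by move=> x; rewrite ler0n.
- by rewrite sum_indicator.
move=> S; rewrite sum_indicator mulr1.
have [jS _ | jNS] := boolP (j \in S).
  by rewrite /bcost (bigD1 j) //= lerDl sumr_ge0.
rewrite big1 => [|x xS]; first by rewrite leNgt b_gt0.
by case: eqP xS => // ->; rewrite (negbTE jNS).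
Qed.

Lemma share_ub_total d b a :
  (forall x, 0 <= d x) -> 0 <= a -> share_ub d b a -> b * \sum_x d x <= a.
Proof.
move=> d_ge0 a_ge0 a_ub; have [D0 | D_gt0] := eqVneq (\sum_x d x) 0.
  by rewrite D0 mulr0.
apply: (share_ub_weights d_ge0 _ a_ub) => //; by rewrite lt_def D_gt0 sumr_ge0.
Qed.

Lemma APS_ge0 ci b : (forall j, 0 <= ci j) -> b <= 1 -> 0 <= APS ci b.
Proof.
move=> ci_ge0 b_le1; case: (posnP m) => [m0 | m_gt0].
  rewrite /APS; set V := (X in sup X).
  suff -> : V = classical_sets.set0 by rewrite sup0.
  apply/classical_sets.seteqP; split => // v [p [[_ p_sum1] _]].
  have no_chore (j : 'I_m) : False by case: j; rewrite m0.
  by move: p_sum1; rewrite big1 => [/esym/eqP | j]; [rewrite oner_eq0 | case: (no_chore j)].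
have j0_price : price_vector (fun x => (x == Ordinal m_gt0)%:R : R).
  by split=> [x | ]; rewrite ?ler0n ?sum_indicator.
by apply: APS_share_ub j0_price _ => // S _; apply: sumr_ge0.
Qed.

End Shares.

Lemma natr_inv_le1 (R : numFieldType) (n : nat) : (0 < n)%N -> n%:R^-1 <= 1 :> R.
Proof. by move=> n_gt0; rewrite invf_le1 ?ler1n ?ltr0n. Qed.

Section Allocations.
Variables (R : realType) (n m : nat).
Implicit Types (A : alloc n m) (d : 'I_m -> R) (c : 'I_n -> 'I_m -> R).

Definition owners A (x : 'I_m) : {set 'I_n} := [set k | x \in A k].

Definition singleton_owners A (x : 'I_m) : {set 'I_n} := [set k | A k == [set x]].

Lemma sum_bcost_owners A d : \sum_k bcost d (A k) = \sum_x #|owners A x|%:R * d x.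
Proof.
under eq_bigr do rewrite /bcost big_mkcond /=.
rewrite exchange_big /=; apply: eq_bigr => x _.
rewrite -big_mkcond /= sumr_const mulr_natl; congr (_ *+ _).
by apply: eq_card => k; rewrite inE.
Qed.

Lemma sum_card_owners A : (\sum_k #|A k| = \sum_x #|owners A x|)%N.
Proof.
under eq_bigr do rewrite -sum1_card big_mkcond /=.
rewrite exchange_big /=; apply: eq_bigr => x _.
by rewrite -big_mkcond /= sum1_card; apply: eq_card => k; rewrite inE.
Qed.

Lemma singleton_owners_sub A x : singleton_owners A x \subset owners A x.
Proof. by apply/subsetP => k; rewrite !inE => /eqP ->; rewrite set11. Qed.

Lemma sum_card_singleton_owners A :
  (\sum_x #|singleton_owners A x| = \sum_k (#|A k| == 1))%N.
Proof.
under eq_bigr do rewrite -sum1_card big_mkcond /=.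
rewrite exchange_big /=; apply: eq_bigr => k _; under eq_bigr do rewrite inE.
have [[y ->] | not_single] := @cards1P _ (A k).
  rewrite (bigD1 y) //= eqxx big1 // => x ne_xy.
  by case: eqP => // /set1_inj eq_yx; rewrite eq_yx eqxx in ne_xy.
rewrite big1 // => x _; case: eqP => // Ak.
by case: not_single; exists x.
Qed.

Lemma rotate_owners c A A' x : rotate c A A' -> #|owners A' x| = #|owners A x|.
Proof.
move=> [s [[_ s_uniq _] A'E]].
pose pi k := if k \in s then next s k else k.
have pi_inj : injective pi.
  move=> k l; rewrite /pi; case: (boolP (k \in s)) => ks; case: (boolP (l \in s)) => ls //.
  - exact: (can_inj (prev_next s_uniq)).
  - by move=> E; move: ls; rewrite -E mem_next ks.
  - by move=> E; move: ks; rewrite E mem_next ls.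
rewrite -(card_preimset (owners A x) pi_inj); apply: eq_card => k.
by rewrite !inE A'E /pi; case: (k \in s).
Qed.

Lemma rotate_bcost_le c A A' k : rotate c A A' -> bcost (c k) (A' k) <= bcost (c k) (A k).
Proof.
move=> [s [[_ _ s_envy] A'E]]; rewrite A'E.
by case: (boolP (k \in s)) => // ks; apply/ltW/s_envy.
Qed.

Lemma rotations_owners c A A' x : rotations c A A' -> #|owners A' x| = #|owners A x|.
Proof. by elim=> // {}A B C /rotate_owners rot _ ->. Qed.

Lemma rotations_bcost_le c A A' k :
  rotations c A A' -> bcost (c k) (A' k) <= bcost (c k) (A k).
Proof. by elim=> // {}A B C /(rotate_bcost_le k) le_BA _ /le_trans; apply. Qed.

Definition allocates_prefix A (j : nat) := forall x : 'I_m, #|owners A x| = (x < j)%N.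

Lemma allocates_prefix_empty : allocates_prefix (@empty_alloc n m) 0.
Proof. by move=> x; apply/eqP; rewrite cards_eq0; apply/eqP/setP => k; rewrite !inE. Qed.

Lemma allocates_prefix_notin A (j : 'I_m) k : allocates_prefix A j -> j \notin A k.
Proof.
move=> A_prefix; apply/negP => jAk.
by move: (A_prefix j); rewrite ltnn => /eqP; rewrite cards_eq0 => /eqP/setP/(_ k); rewrite !inE jAk.
Qed.

Lemma allocates_prefix_add_chore A i (j : 'I_m) :
  allocates_prefix A j -> allocates_prefix (add_chore A i j) j.+1.
Proof.
move=> A_prefix x; rewrite /add_chore ltnS leq_eqVlt.
have [-> | ne_xj] := eqVneq x j.
  rewrite eqxx; apply/eqP/cards1P; exists i; apply/setP => k; rewrite !inE.
  by case: eqVneq => [-> | _]; rewrite ?setU11 // (negbTE (allocates_prefix_notin k A_prefix)).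
rewrite (_ : (x == j :> nat) = false) /=; last exact/negbTE.
rewrite -A_prefix; apply: eq_card => k.
by rewrite !inE; case: (k == i); rewrite ?inE ?(negbTE ne_xj).
Qed.

Lemma allocates_prefix_rotations c A A' j :
  rotations c A A' -> allocates_prefix A j -> allocates_prefix A' j.
Proof. by move=> rot A_prefix x; rewrite (rotations_owners x rot). Qed.

Lemma sum_bcost_prefix A (j : nat) d :
  allocates_prefix A j -> \sum_k bcost d (A k) = \sum_(x : 'I_m | (x < j)%N) d x.
Proof.
move=> A_prefix; rewrite sum_bcost_owners [RHS]big_mkcond; apply: eq_bigr => x _.
by rewrite A_prefix; case: (x < j)%N; rewrite ?mul1r ?mul0r.
Qed.

Lemma sum_card_prefix A (j : nat) :
  (j <= m)%N -> allocates_prefix A j -> (\sum_k #|A k| = j)%N.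
Proof.
move=> le_jm A_prefix; rewrite sum_card_owners -[RHS](card_ord_lt le_jm) -sum1_card.
by rewrite [RHS]big_mkcond; apply: eq_bigr => x _; rewrite A_prefix inE; case: (x < j)%N.
Qed.

End Allocations.

Section IdoCost.
Variables (R : realType) (n m : nat) (c : 'I_n -> 'I_m -> R) (i : 'I_n).

Lemma ido_cost_perm : exists sg : 'I_m -> 'I_m, [/\ injective sg,
  ido_cost c i =1 c i \o sg &
  forall k l : 'I_m, (k <= l)%N -> c i (sg l) <= c i (sg k)].
Proof.
pose ge_cost (x y : 'I_m) := c i y <= c i x.
pose s := sort ge_cost (enum 'I_m).
have size_s : size s = m by rewrite size_sort size_enum_ord.
have ge_cost_trans : transitive ge_cost by move=> x y z /[swap]; apply: le_trans.
have s_sorted : sorted ge_cost s by apply: sort_sorted => x y; apply: le_total.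
exists (fun k => nth k s k); split.
- move=> k l /eqP; rewrite (set_nth_default k l) ?size_s // nth_uniq ?size_s //.
    by move/eqP/val_inj.
  by rewrite sort_uniq enum_uniq.
- move=> k; rewrite /ido_cost (_ : sort _ _ = map (c i) s); last first.
    by rewrite /s (map_sort (leT := fun x y : R => y <= x)).
  by rewrite (nth_map k) ?size_s.
- move=> k l le_kl; rewrite (set_nth_default k l) ?size_s //.
  apply: (sorted_leq_nth ge_cost_trans) => //; first by move=> x; apply: lexx.
  + by rewrite inE size_s.
  + by rewrite inE size_s.
Qed.

Lemma ido_cost_ge0 : (forall x, 0 <= c i x) -> forall x, 0 <= ido_cost c i x.
Proof. by move=> c_ge0 x; have [sg [_ -> _]] := ido_cost_perm; apply: c_ge0. Qed.

Lemma ido_cost_noninc (k l : 'I_m) : (k <= l)%N -> ido_cost c i l <= ido_cost c i k.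
Proof. by have [sg [_ sgE sg_noninc]] := ido_cost_perm; rewrite !sgE; apply: sg_noninc. Qed.

Lemma exists_cost_le_ido_cost (T : {set 'I_m}) (j : 'I_m) :
  #|T| = j.+1 -> exists2 y, y \in T & c i y <= ido_cost c i j.
Proof.
move=> card_T; have [sg [sg_inj sgE sg_noninc]] := ido_cost_perm.
have : ~~ (sg @^-1: T \subset [set k : 'I_m | (k < j)%N]).
  apply/negP => /subset_leq_card; rewrite card_preimset // card_T.
  by rewrite card_ord_lt ?ltnn // ltnW.
case/subsetPn => k; rewrite !inE -leqNgt => kT le_jk.
by exists (sg k) => //; rewrite sgE sg_noninc.
Qed.

End IdoCost.

Section AddChoreBound.
Variables (R : realType) (n m : nat) (A : alloc n m) (i : 'I_n) (j : 'I_m).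
Variables (d : 'I_m -> R) (a : R).
Hypotheses (d_ge0 : forall x, 0 <= d x)
  (d_noninc : forall x y : 'I_m, (x <= y)%N -> d y <= d x)
  (A_prefix : allocates_prefix A j)
  (i_min : forall k, bcost d (A i) <= bcost d (A k))
  (a_ub : share_ub d n%:R^-1 a).

Let n_gt0 : (0 < n)%N := leq_ltn_trans (leq0n i) (ltn_ord i).

Let weight (x : 'I_m) : nat := (x <= j)%N + #|singleton_owners A x|.

Let weight_le2 x : (weight x <= 2)%N.
Proof.
have := subset_leq_card (singleton_owners_sub A x); rewrite A_prefix /weight.
by case: (ltngtP x j) => // _; case: #|_| => [|[]].
Qed.

Let weight_gt0 x : (0 < weight x)%N -> (x <= j)%N.
Proof.
have := subset_leq_card (singleton_owners_sub A x); rewrite A_prefix /weight.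
by case: (ltngtP x j) => //; case: #|_|.
Qed.

Let weight_total : (forall k, A k != set0) -> (2 * n < \sum_x weight x)%N.
Proof.
move=> A_ne; rewrite big_split /= sum_card_singleton_owners.
have -> : (\sum_(x : 'I_m) (x <= j)%N = j.+1)%N.
  rewrite -[RHS](card_ord_lt (ltn_ord j)) -sum1_card [RHS]big_mkcond /=.
  by apply: eq_bigr => x _; rewrite inE ltnS; case: (x <= j)%N.
have two_each k : (2 <= #|A k| + (#|A k| == 1))%N.
  have : (0 < #|A k|)%N by rewrite card_gt0 A_ne.
  by case: #|A k| => [|[|q]].
have : (\sum_(k < n) 2 <= \sum_k (#|A k| + (#|A k| == 1)))%N.
  by apply: leq_sum => k _; apply: two_each.
rewrite big_split /= (sum_card_prefix (ltnW (ltn_ord j)) A_prefix) sum_nat_const card_ord.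
lia.
Qed.

Lemma share_lb_nonempty_bundles :
  (forall k, A k != set0) -> Num.min (bcost d (A i) + d j) (3 * d j) <= a.
Proof.
move=> A_ne; have W_gt := weight_total A_ne.
apply: (share_ub_weights (w := fun x => (weight x)%:R) _ _ a_ub) => [x | | S].
- exact: ler0n.
- by rewrite -natr_sum ltr0n (leq_ltn_trans _ W_gt).
rewrite -!natr_sum mulrC ler_pdivrMr ?ltr0n // -natrM ler_nat => heavy.
have {heavy} wS_ge3 : (3 <= \sum_(x in S) weight x)%N by nia.
have [/existsP [x /andP [xS /set0Pn [k]]] | no_single] :=
  boolP [exists x in S, singleton_owners A x != set0].
  rewrite inE => /eqP Ak.
  have [y /and3P [yS ne_yx wy]] : exists y, [&& y \in S, y != x & (0 < weight y)%N].
    apply/existsP; apply: contraTT wS_ge3 => /existsPn none.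
    rewrite -ltnNge (bigD1 x) //= big1 ?addn0 ?ltnS ?weight_le2 // => y /andP [yS ne_yx].
    by have := none y; rewrite yS ne_yx /= lt0n negbK => /eqP.
  rewrite ge_min; apply/orP; left.
  rewrite /bcost [leRHS](bigD1 x) //= [X in _ <= _ + X](bigD1 y) /=; last by rewrite yS ne_yx.
  rewrite addrA ler_wpDr ?sumr_ge0 // lerD //; last exact/d_noninc/weight_gt0.
  by have := i_min k; rewrite Ak /bcost big_set1.
have weight_S x : x \in S -> weight x = (x <= j)%N.
  move=> xS; move/existsPn/(_ x): no_single; rewrite xS negbK => /eqP no_owner.
  by rewrite /weight no_owner cards0 addn0.
rewrite ge_min; apply/orP; right.
apply: (@le_trans _ _ ((\sum_(x in S) weight x)%:R * d j)).
  by rewrite ler_wpM2r // (ler_nat R 3).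
rewrite natr_sum mulr_suml; apply: ler_sum => x xS; rewrite weight_S //.
by case: leqP => [/d_noninc | _]; rewrite ?mul1r ?mul0r.
Qed.

Lemma add_chore_bound : bcost d (A i) + d j <= (4 * n - 1)%:R / (3 * n)%:R * a.
Proof.
have dj_le_a : d j <= a by apply: share_ub_point a_ub; rewrite ?invr_gt0 ?ltr0n.
have a_ge0 : 0 <= a := le_trans (d_ge0 j) dj_le_a.
have n_min_le_total : n%:R * bcost d (A i) + d j <= \sum_x d x.
  have n_min : n%:R * bcost d (A i) <= \sum_(x : 'I_m | (x < j)%N) d x.
    have : \sum_(k < n) bcost d (A i) <= \sum_k bcost d (A k) by apply: ler_sum.
    by rewrite sumr_const card_ord mulr_natl (sum_bcost_prefix _ A_prefix).
  rewrite [leRHS](bigD1 j) //= addrC lerD2r; apply: le_trans n_min _.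
  rewrite big_mkcond [leRHS]big_mkcond; apply: ler_sum => x _.
  case: ltnP => [lt_xj | _]; last by case: (x != j).
  by have -> : x != j by apply: contraTneq lt_xj => ->; rewrite ltnn.
have total_le : \sum_x d x <= n%:R * a.
  by rewrite mulrC -ler_pdivrMr ?ltr0n // mulrC share_ub_total.
rewrite mulrAC ler_pdivlMr ?ltr0n ?muln_gt0 // natrB ?muln_gt0 // !natrM.
have N_ge1 : 1 <= n%:R :> R by rewrite ler1n.
have [/existsP [k /eqP Ak] | /existsPn A_ne] := boolP [exists k, A k == set0].
  have v_le0 : bcost d (A i) <= 0 by have := i_min k; rewrite Ak /bcost big_set0.
  nra.
have := share_lb_nonempty_bundles A_ne; rewrite ge_min => /orP [] lb; nra.
Qed.

End AddChoreBound.

Section AlgChores.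
Variables (R : realType) (n m : nat) (c : 'I_n -> 'I_m -> R).
Hypothesis c_ge0 : forall k x, 0 <= c k x.

Lemma algchores_ido_reach_bound j A : algchores_ido_reach (ido_cost c) j A ->
  allocates_prefix A j /\ forall k,
    bcost (ido_cost c k) (A k) <= (4 * n - 1)%:R / (3 * n)%:R * APS (c k) n%:R^-1.
Proof.
elim=> [|{}j {}A A' i _ [A_prefix A_bound] i_envy_free rot_A' _].
  split=> [|k]; first exact: allocates_prefix_empty.
  have n_gt0 : (0 < n)%N := leq_ltn_trans (leq0n k) (ltn_ord k).
  rewrite /bcost big_set0 mulr_ge0 ?divr_ge0 ?ler0n //.
  exact: APS_ge0 (c_ge0 k) (natr_inv_le1 _ n_gt0).
split; first exact: allocates_prefix_rotations rot_A' (allocates_prefix_add_chore i A_prefix).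
move=> k; apply: le_trans (rotations_bcost_le k rot_A') _.
rewrite /add_chore; case: eqVneq => [-> | _]; last exact: A_bound.
have n_gt0 : (0 < n)%N := leq_ltn_trans (leq0n i) (ltn_ord i).
have [sg [sg_inj sgE _]] := ido_cost_perm c i.
rewrite /bcost big_setU1 ?allocates_prefix_notin //= addrC.
apply: add_chore_bound A_prefix _ _ => //.
- exact: ido_cost_ge0.
- exact: ido_cost_noninc.
- by move=> l; rewrite leNgt; apply/negP => /i_envy_free.
- apply: (share_ub_perm sg_inj sgE).
  exact: APS_share_ub (natr_inv_le1 R n_gt0).
Qed.

Lemma reduce_reach_bound A' j B T : reduce_reach c A' j B T ->
  #|T| = j /\ forall k, bcost (c k) (B k) <= \sum_(x in A' k | (j <= x)%N) ido_cost c k x.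
Proof.
elim=> [|{}j {}B {}T i x _ [card_T B_le] j_A'i xT x_min].
  split=> [|k]; first by rewrite cardsT card_ord.
  by rewrite /bcost big_set0 sumr_ge0 // => x _; apply: ido_cost_ge0.
split; first by move: card_T; rewrite (cardsD1 x) xT add1n => -[].
move=> k; rewrite /add_chore; case: eqVneq => [-> | _].
  have B_le_i := B_le i.
  rewrite (eq_bigl (fun y => (y \in A' i) && (j <= y)%N && (y != j))) in B_le_i; last first.
    move=> y; rewrite ltn_neqAle eq_sym.
    by case: (y \in A' i); case: (y != j); case: (j <= y)%N.
  rewrite [leRHS](bigD1 j) /=; last by rewrite j_A'i leqnn.
  apply: le_trans (bcost_setU1_le _ _ (c_ge0 i)) (lerD _ B_le_i).
  have [y yT le_y] := exists_cost_le_ido_cost c i card_T.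
  exact: le_trans (x_min y yT) le_y.
apply: le_trans (B_le k) _; rewrite big_mkcond [leRHS]big_mkcond /=; apply: ler_sum => y _.
case: (y \in A' k) => //=; case: (ltnP j y) => [/ltnW -> // | _].
by case: (j <= y)%N => //; apply: ido_cost_ge0.
Qed.

End AlgChores.

Theorem theorem4 (R : realType) (n m : nat) (c : 'I_n -> 'I_m -> R) :
  (forall i j, 0 <= c i j) ->
  forall B : alloc n m, algchores c B ->
  forall i : 'I_n,
    bcost (c i) (B i) <=
      ((4 * n - 1)%:R / (3 * n)%:R) * APS (c i) (n%:R)^-1.
Proof.
move=> c_ge0 B [A' [ido_A' [T red_B]]] i.
have [_ A'_bound] := algchores_ido_reach_bound c_ge0 ido_A'.
have [_ B_le] := reduce_reach_bound c_ge0 red_B.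
apply: le_trans (B_le i) (le_trans _ (A'_bound i)).
by rewrite /bcost; under eq_bigl do rewrite leq0n andbT.
Qed.
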